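(* Assume $b_1<n^*$, $b_2<m^*$ and $n^*=m^*$. Then for every minimum set cover $S^{\min}$ and every maximum set packing $T^{\max}$, $(\sigma^1(S^{\min},b_1),\sigma^2(T^{\max},b_2))$ is a Nash equilibrium of $\Gamma(b_1,b_2)$, and every Nash equilibrium $(\sigma^{1*},\sigma^{2*})$ satisfies $U_1(\sigma^{1*},\sigma^{2*})=\frac{b_1b_2}{n^*}$, $U_2(\sigma^{1*},\sigma^{2*})=b_2(1-\frac{b_1}{n^*})$ and $r(\sigma^{1*},\sigma^{2*})=\frac{b_1}{n^*}$.
   Context: Detection model: finite nonempty sets $\mathcal V$, $\mathcal E$, monitoring sets $\mathcal C_i\subseteq\mathcal E$ ($i\in\mathcal V$) with every $e\in\mathcal E$ in some $\mathcal C_i$; $\mathcal C_S=\bigcup_{i\in S}\mathcal C_i$; $F(S,T)=|\mathcal C_S\cap T|$. Set cover: $S\subseteq\mathcal V$ with $\mathcal C_S=\mathcal E$; $n^*$ = minimum size of a set cover; a minimum set cover is a set cover of size $n^*$. Set packing: $T\subseteq\mathcal E$ with $|\mathcal C_i\cap T|\le1$ for all $i$; $m^*$ = maximum size of a set packing; a maximum set packing is one of size $m^*$. Game $\Gamma(b_1,b_2)$ ($b_1,b_2$ positive integers): $\mathcal A_1=\{S\subseteq\mathcal V:|S|\le b_1\}$, $\mathcal A_2=\{T\subseteq\mathcal E:|T|\le b_2\}$; mixed strategies $\sigma^1\in\Delta(\mathcal A_1)$, $\sigma^2\in\Delta(\mathcal A_2)$ (independent); payoffs $U_1=\mathbb E[F(S,T)]$,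 $U_2=\mathbb E[|T|]-\mathbb E[F(S,T)]$; Nash equilibrium as usual. Expected detection rate $r(\sigma)=\mathbb E[F(S,T)/|T|]$. Cyclic strategies: for $S=\{i_1,\dots,i_n\}$ with $n\ge b_1$, $S^k=\{i_k,\dots,i_{k+b_1-1}\}$ (indices cyclic mod $n$), $k=1,\dots,n$, and $\sigma^1(S,b_1)$ puts probability $1/n$ on each $S^k$; for $T=\{e_1,\dots,e_m\}$ with $m\ge b_2$, $T^l=\{e_l,\dots,e_{l+b_2-1}\}$ cyclically and $\sigma^2(T,b_2)$ puts probability $1/m$ on each $T^l$. *)

From HB Require Import structures.
From mathcomp Require Import all_boot all_order all_algebra.
Set Implicit Arguments. Unset Strict Implicit. Unset Printing Implicit Defensive.
Import Order.TTheory GRing.Theory Num.Theory.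

Section Detection.
Variables (V E : finType) (C : V -> {set E}).

Definition CS (S : {set V}) : {set E} := \bigcup_(i in S) C i.

Definition F (S : {set V}) (T : {set E}) : nat := #|CS S :&: T|.

Definition is_cover (S : {set V}) : bool := CS S == [set: E].

Definition is_packing (T : {set E}) : bool := [forall i, #|C i :&: T| <= 1].

Definition nstar : nat := \big[minn/#|V|]_(S : {set V} | is_cover S) #|S|.

Definition mstar : nat := \max_(T : {set E} | is_packing T) #|T|.

Definition min_cover (S : {set V}) : Prop := is_cover S /\ #|S| = nstar.
Definition max_packing (T : {set E}) : Prop := is_packing T /\ #|T| = mstar.

End Detection.

Section Game.
Variable R : realFieldType.
Local Open Scope ring_scope.

(* A mixed strategy over {A : {set X} | #|A| <= b}, represented as a
   probability mass function on {set X} vanishing outside the action set. *)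
Definition is_mixed (X : finType) (b : nat) (sigma : {set X} -> R) : Prop :=
  (forall A : {set X}, 0 <= sigma A) /\ (forall A : {set X}, (b < #|A|)%N -> sigma A = 0) /\
  \sum_(A : {set X}) sigma A = 1.

Variables (V E : finType) (C : V -> {set E}).

Definition U1 (s1 : {set V} -> R) (s2 : {set E} -> R) : R :=
  \sum_(S : {set V}) \sum_(T : {set E}) s1 S * s2 T * (F C S T)%:R.

Definition U2 (s1 : {set V} -> R) (s2 : {set E} -> R) : R :=
  \sum_(S : {set V}) \sum_(T : {set E}) s1 S * s2 T * (#|T|%:R - (F C S T)%:R).

(* expected detection rate; F/|T| with the convention x/0 = 0 *)
Definition rate (s1 : {set V} -> R) (s2 : {set E} -> R) : R :=
  \sum_(S : {set V}) \sum_(T : {set E}) s1 S * s2 T * ((F C S T)%:R / #|T|%:R).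

Definition is_NE (b1 b2 : nat) (s1 : {set V} -> R) (s2 : {set E} -> R) : Prop :=
  [/\ is_mixed b1 s1, is_mixed b2 s2,
      (forall t1, is_mixed b1 t1 -> U1 t1 s2 <= U1 s1 s2) &
      (forall t2, is_mixed b2 t2 -> U2 s1 t2 <= U2 s1 s2)].

End Game.

(* Cyclic strategy: for the enumeration s = [:: x_1; ...; x_n] (n >= b),
   the k-th window is {x_k, ..., x_(k+b-1)} (cyclically), i.e. the first b
   elements of s rotated by k; each of the n windows gets probability 1/n. *)
Definition window (X : finType) (s : seq X) (b k : nat) : {set X} :=
  [set x in take b (rot k s)].

Definition cyc_strat (R : realFieldType) (X : finType) (s : seq X) (b : nat)
  (A : {set X}) : R :=
  (\sum_(k < size s) ((window s b k == A)%:R : R)) / (size s)%:R.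

From HB Require Import structures.
From mathcomp Require Import all_boot all_order all_algebra.
From mathcomp Require Import zify ring lra.
Import Order.TTheory GRing.Theory Num.Theory.

Set Implicit Arguments. Unset Strict Implicit. Unset Printing Implicit Defensive.

(* Enumerate a minimum cover and a maximum packing cyclically, both of size n = n* = m*.
   Every element of an enumeration lies in exactly b of its n windows. Since each
   monitoring set contains at most one packed edge, a placement S of at most b1
   monitors detects on average at most b1 b2 / n of the cyclic packing attack;
   since every edge is monitored by some cover vertex, the cyclic cover placement
   detects on average at least b1 |T| / n of any attack T. Both players thus
   guarantee themselves the value b1 b2 / n, which makes the cyclic pair an
   equilibrium. In any equilibrium the attacker must therefore spend the whole
   budget b2 almost surely (here b1 < n is used), which fixes U2 and the rate. *)

Lemma index_rot (X : eqType) (s : seq X) x k : uniq s -> x \in s -> (k < size s)%N ->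
  index x (rot k s) =
    if (k <= index x s)%N then (index x s - k)%N else (size s - k + index x s)%N.
Proof.
move=> s_uniq xs ks; have size_take_k : size (take k s) = k by rewrite size_takel // ltnW.
have : uniq (take k s ++ drop k s) by rewrite cat_take_drop.
rewrite cat_uniq => /and3P[_ take_drop_disj _].
have -> : index x s = index x (take k s ++ drop k s) by rewrite cat_take_drop.
rewrite /rot !index_cat size_drop size_take_k.
case: (boolP (x \in take k s)) => [x_take|x_ntake].
- have x_ndrop : x \notin drop k s.
    by apply/negP => x_drop; move/hasPn: take_drop_disj => /(_ x x_drop); rewrite x_take.
  have lt_k : (index x (take k s) < k)%N by rewrite -[k in (_ < k)%N]size_take_k index_mem.
  by rewrite (negbTE x_ndrop) leqNgt lt_k.
- have x_drop : x \in drop k s.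
    by move: xs; rewrite -{1}(cat_take_drop k s) mem_cat (negbTE x_ntake).
  by rewrite x_drop leq_addr addKn.
Qed.

Lemma sum_ltn_ord n b : (b <= n)%N -> (\sum_(k < n) (k < b) = b)%N.
Proof.
move=> bn; rewrite (eq_bigr (fun k : 'I_n => if (k < b)%N then 1%N else 0%N)) //.
by rewrite -big_mkcond /= -(big_ord_widen _ (fun=> 1%N) bn) sum1_card card_ord.
Qed.

Lemma card_setI_sum (X : finType) (A B : {set X}) :
  #|A :&: B| = (\sum_(x in A) (x \in B))%N.
Proof.
rewrite -sum1_card big_mkcond [RHS]big_mkcond /=; apply: eq_bigr => x _.
by rewrite inE; case: (x \in A); case: (x \in B).
Qed.

Lemma card_bigcup_le (I X : finType) (P : pred I) (A : I -> {set X}) :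
  (#|\bigcup_(i | P i) A i| <= \sum_(i | P i) #|A i|)%N.
Proof.
apply: (big_ind2 (fun (B : {set X}) k => #|B| <= k)%N); first by rewrite cards0.
  by move=> B1 k1 B2 k2 ? ?; apply: leq_trans (leq_card_setU B1 B2) (leq_add _ _).
by [].
Qed.

Lemma set_perm_enum (X : finType) (A : {set X}) s : perm_eq s (enum A) -> [set x in s] = A.
Proof. by move=> s_A; apply/setP => x; rewrite inE (perm_mem s_A) mem_enum. Qed.

(* k |-> p - k (mod n) is an involution of 'I_n. *)
Lemma sum_ord_reflect n p (F : nat -> nat) : (p < n)%N ->
  (\sum_(k < n) F (if k <= p then p - k else n - k + p) = \sum_(k < n) F k)%N.
Proof.
move=> p_lt_n.
have j_lt_n (k : 'I_n) : ((if k <= p then p - k else n - k + p) < n)%N.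
  by case: ifP; have := ltn_ord k; lia.
pose J (k : 'I_n) : 'I_n := Ordinal (j_lt_n k).
have JK : involutive J.
  move=> k; apply: val_inj => /=; have k_lt_n := ltn_ord k.
  case: (leqP k p) => kp; first by rewrite leq_subr; lia.
  by rewrite ifF; [lia | apply/negbTE; rewrite -ltnNge; lia].
by rewrite [RHS](reindex_inj (inv_inj JK)).
Qed.

Section Windows.
Variables (X : finType) (s : seq X) (b : nat).

Lemma card_window_le k : (#|window s b k| <= b)%N.
Proof.
rewrite /window cardsE; apply: leq_trans (card_size _) _.
by rewrite size_take_min geq_minl.
Qed.

Lemma card_window k : uniq s -> (b <= size s)%N -> #|window s b k| = b.
Proof.
move=> s_uniq bs; rewrite /window cardsE.
have /card_uniqP -> : uniq (take b (rot k s)) by rewrite take_uniq // rot_uniq.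
by rewrite size_takel // size_rot.
Qed.

Lemma mem_window k x : x \in s -> (x \in window s b k) = (index x (rot k s) < b)%N.
Proof. by move=> xs; rewrite /window inE in_take ?mem_rot. Qed.

Lemma window_subset k : {subset window s b k <= s}.
Proof. by move=> x; rewrite /window inE => /mem_take; rewrite mem_rot. Qed.

Lemma sum_mem_window x : uniq s -> x \in s -> (b <= size s)%N ->
  (\sum_(k < size s) (x \in window s b k) = b)%N.
Proof.
move=> s_uniq xs bs; rewrite -[RHS](sum_ltn_ord bs).
rewrite -(@sum_ord_reflect _ (index x s) (fun k => k < b)%N) /=; last by rewrite index_mem.
by apply: eq_bigr => k _; rewrite mem_window // index_rot.
Qed.

End Windows.

Section Detection.
Variables (V E : finType) (C : V -> {set E}).

Lemma F_packing_le (S : {set V}) (T : {set E}) : is_packing C T -> (F C S T <= #|S|)%N.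
Proof.
move=> /forallP T_packing.
have CS_T_sub : CS C S :&: T \subset \bigcup_(i in S) (C i :&: T).
  apply/subsetP => e; rewrite inE => /andP[/bigcupP[i iS ei] eT].
  by apply/bigcupP; exists i => //; rewrite inE ei eT.
apply: leq_trans (subset_leq_card CS_T_sub) _.
apply: leq_trans (card_bigcup_le _ _) _.
by rewrite -sum1_card; apply: leq_sum => i _; apply: T_packing.
Qed.

(* Each packed edge lies in exactly b windows, and S detects at most #|S| of them. *)
Lemma sum_F_window_packing_le (S : {set V}) (t : seq E) b :
  uniq t -> (b <= size t)%N -> is_packing C [set e in t] ->
  (\sum_(l < size t) F C S (window t b l) <= b * #|S|)%N.
Proof.
move=> t_uniq bt t_packing; rewrite /F.
under eq_bigr => l _ do rewrite card_setI_sum.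
rewrite exchange_big /=.
apply: (@leq_trans (\sum_(e in CS C S) b * (e \in [set e in t]))%N).
  apply: leq_sum => e _; rewrite inE.
  case: (boolP (e \in t)) => et; first by rewrite muln1 sum_mem_window.
  rewrite big1 // => l _; apply/eqP; rewrite eqb0.
  by apply: contra et; apply: window_subset.
by rewrite -big_distrr /= -card_setI_sum leq_mul2l F_packing_le ?orbT.
Qed.

(* Each edge is seen by some cover vertex, which lies in exactly b windows. *)
Lemma sum_F_window_cover_ge (T : {set E}) (s : seq V) b :
  uniq s -> (b <= size s)%N -> is_cover C [set i in s] ->
  (b * #|T| <= \sum_(k < size s) F C (window s b k) T)%N.
Proof.
move=> s_uniq bs /eqP s_cover; rewrite /F.
under eq_bigr => k _ do rewrite setIC card_setI_sum.
rewrite exchange_big /= mulnC -sum_nat_const; apply: leq_sum => e _.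
have : e \in CS C [set i in s] by rewrite s_cover inE.
case/bigcupP => i; rewrite inE => i_s ei.
rewrite -{1}(sum_mem_window s_uniq i_s bs); apply: leq_sum => k _.
case: (boolP (i \in window s b k)) => // iw.
by rewrite (_ : e \in CS C _) //; apply/bigcupP; exists i.
Qed.

Lemma exists_min_cover :
  (forall e, exists i, e \in C i) -> exists S, min_cover C S.
Proof.
move=> covered; rewrite /min_cover /nstar.
apply: (big_ind (fun k => exists S, is_cover C S /\ #|S| = k)).
- exists setT; split; last by rewrite cardsT.
  apply/eqP/setP => e; have [i ei] := covered e.
  by rewrite inE; apply/bigcupP; exists i; rewrite ?inE.
- by move=> k1 k2 ? ?; rewrite /minn; case: ifP.
- by move=> S ?; exists S.
Qed.

Lemma exists_max_packing : exists T, max_packing C T.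
Proof.
rewrite /max_packing /mstar.
apply: (big_ind (fun k => exists T, is_packing C T /\ #|T| = k)).
- exists set0; split; last by rewrite cards0.
  by apply/forallP => i; rewrite setI0 cards0.
- by move=> k1 k2 ? ?; rewrite /maxn; case: ifP.
- by move=> T ?; exists T.
Qed.

End Detection.

Local Open Scope ring_scope.

Section MixedStrategies.
Variable R : realFieldType.

Definition expect_card (X : finType) (sigma : {set X} -> R) : R :=
  \sum_A sigma A * #|A|%:R.

Lemma expect_cyc_strat (X : finType) (s : seq X) b (g : {set X} -> R) :
  \sum_A cyc_strat R s b A * g A = (\sum_(k < size s) g (window s b k)) / (size s)%:R.
Proof.
rewrite /cyc_strat; under eq_bigr => A _ do rewrite mulrAC.
rewrite -mulr_suml; congr (_ / _).
under eq_bigr => A _ do rewrite mulr_suml.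
rewrite exchange_big /=; apply: eq_bigr => k _.
rewrite (bigD1 (window s b k)) //= eqxx mul1r big1 ?addr0 // => A kA.
by rewrite eq_sym (negbTE kA) mul0r.
Qed.

Lemma cyc_strat_mixed (X : finType) (s : seq X) b :
  (0 < size s)%N -> is_mixed b (cyc_strat R s b).
Proof.
move=> s_gt0; split; [|split].
- by move=> A; rewrite divr_ge0 // sumr_ge0.
- move=> A bA; rewrite /cyc_strat big1 ?mul0r // => k _.
  by case: eqP => // kA; move: bA; rewrite -kA ltnNge card_window_le.
- under eq_bigr => A _ do rewrite -[cyc_strat _ _ _ _]mulr1.
  by rewrite expect_cyc_strat sumr_const card_ord -mulr_natl mulr1 divff ?pnatr_eq0 -?lt0n.
Qed.

Lemma expect_card_cyc_strat (X : finType) (s : seq X) b :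
  uniq s -> (b <= size s)%N -> (0 < size s)%N -> expect_card (cyc_strat R s b) = b%:R.
Proof.
move=> s_uniq bs s_gt0; rewrite /expect_card expect_cyc_strat.
under eq_bigr => k _ do rewrite card_window //.
by rewrite sumr_const card_ord -[_ *+ size s]mulr_natr mulfK ?pnatr_eq0 -?lt0n.
Qed.

Lemma expect_mixed_le (X : finType) b (sigma : {set X} -> R) (g : {set X} -> R) c :
  is_mixed b sigma -> (forall A : {set X}, (#|A| <= b)%N -> g A <= c) ->
  \sum_A sigma A * g A <= c.
Proof.
move=> [sigma_ge0 [sigma_out sigma_sum1]] g_le.
rewrite -[c]mul1r -sigma_sum1 mulr_suml; apply: ler_sum => A _.
case: (leqP #|A| b) => bA; first by rewrite ler_wpM2l ?g_le.
by rewrite sigma_out // !mul0r.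
Qed.

Lemma expect_card_mixed_le (X : finType) b (sigma : {set X} -> R) :
  is_mixed b sigma -> expect_card sigma <= b%:R.
Proof. by move=> sigma_mixed; apply: (expect_mixed_le sigma_mixed) => A; rewrite ler_nat. Qed.

Lemma expect_card_mixed_full (X : finType) b (sigma : {set X} -> R) :
  is_mixed b sigma -> expect_card sigma = b%:R -> forall A, sigma A = 0 \/ #|A| = b.
Proof.
move=> [sigma_ge0 [sigma_out sigma_sum1]] sigma_full A.
have slack_ge0 (A' : {set X}) : true -> 0 <= sigma A' * (b%:R - #|A'|%:R).
  case: (leqP #|A'| b) => bA' _; last by rewrite sigma_out ?mul0r.
  by rewrite mulr_ge0 // subr_ge0 ler_nat.
have slack_sum0 : \sum_A' sigma A' * (b%:R - #|A'|%:R) = 0.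
  under eq_bigr => A' _ do rewrite mulrBr.
  by rewrite sumrB -mulr_suml sigma_sum1 mul1r -/(expect_card sigma) sigma_full subrr.
have /(_ A isT)/eqP := psumr_eq0P slack_ge0 slack_sum0.
by rewrite mulf_eq0 subr_eq0 eqr_nat => /orP[/eqP|/eqP]; [left | right].
Qed.

End MixedStrategies.

Section Payoffs.
Variables (R : realFieldType) (V E : finType) (C : V -> {set E}).

Lemma U1_by_placement (s1 : {set V} -> R) (s2 : {set E} -> R) :
  U1 C s1 s2 = \sum_S s1 S * (\sum_T s2 T * (F C S T)%:R).
Proof. by apply: eq_bigr => S _; rewrite mulr_sumr; apply: eq_bigr => T _; rewrite mulrA. Qed.

Lemma U1_by_attack (s1 : {set V} -> R) (s2 : {set E} -> R) :
  U1 C s1 s2 = \sum_T s2 T * (\sum_S s1 S * (F C S T)%:R).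
Proof.
rewrite /U1 exchange_big /=; apply: eq_bigr => T _; rewrite mulr_sumr.
by apply: eq_bigr => S _; rewrite mulrCA mulrA.
Qed.

Lemma U2E (s1 : {set V} -> R) (s2 : {set E} -> R) :
  \sum_S s1 S = 1 -> U2 C s1 s2 = expect_card s2 - U1 C s1 s2.
Proof.
move=> s1_sum1; rewrite /U2 /U1.
have -> : expect_card s2 = \sum_S \sum_T s1 S * s2 T * #|T|%:R.
  by rewrite exchange_big; apply: eq_bigr => T _; rewrite -!mulr_suml s1_sum1 mul1r.
rewrite -sumrB; apply: eq_bigr => S _; rewrite -sumrB.
by apply: eq_bigr => T _; rewrite mulrBr.
Qed.

Lemma rate_full_support (s1 : {set V} -> R) (s2 : {set E} -> R) b :
  (forall T, s2 T = 0 \/ #|T| = b) -> rate C s1 s2 = U1 C s1 s2 / b%:R.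
Proof.
move=> s2_full; rewrite /rate /U1 mulr_suml; apply: eq_bigr => S _.
rewrite mulr_suml; apply: eq_bigr => T _.
by case: (s2_full T) => [->|->]; rewrite ?mulr0 ?mul0r ?mulrA.
Qed.

Lemma expect_F_cyc_packing_le (S : {set V}) (t : seq E) b :
  uniq t -> (b <= size t)%N -> (0 < size t)%N -> is_packing C [set e in t] ->
  \sum_T cyc_strat R t b T * (F C S T)%:R <= (b * #|S|)%:R / (size t)%:R.
Proof.
move=> t_uniq bt t_gt0 t_packing; rewrite expect_cyc_strat ler_pM2r ?invr_gt0 ?ltr0n //.
by rewrite -natr_sum ler_nat sum_F_window_packing_le.
Qed.

Lemma expect_F_cyc_cover_ge (T : {set E}) (s : seq V) b :
  uniq s -> (b <= size s)%N -> (0 < size s)%N -> is_cover C [set i in s] ->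
  (b * #|T|)%:R / (size s)%:R <= \sum_S cyc_strat R s b S * (F C S T)%:R.
Proof.
move=> s_uniq bs s_gt0 s_cover; rewrite expect_cyc_strat ler_pM2r ?invr_gt0 ?ltr0n //.
by rewrite -natr_sum ler_nat sum_F_window_cover_ge.
Qed.

End Payoffs.

Section Equilibrium.
Variables (R : realFieldType) (V E : finType) (C : V -> {set E}).
Variables (Smin : {set V}) (Tmax : {set E}) (s : seq V) (t : seq E) (n b1 b2 : nat).
Hypotheses (Smin_cover : is_cover C Smin) (Tmax_packing : is_packing C Tmax).
Hypotheses (card_Smin : #|Smin| = n) (card_Tmax : #|Tmax| = n).
Hypotheses (s_enum : perm_eq s (enum Smin)) (t_enum : perm_eq t (enum Tmax)).
Hypotheses (n_gt0 : (0 < n)%N) (b1_le : (b1 <= n)%N) (b2_le : (b2 <= n)%N).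

Let s_uniq : uniq s. Proof. by rewrite (perm_uniq s_enum) enum_uniq. Qed.
Let t_uniq : uniq t. Proof. by rewrite (perm_uniq t_enum) enum_uniq. Qed.
Let size_s : size s = n. Proof. by rewrite (perm_size s_enum) -cardE. Qed.
Let size_t : size t = n. Proof. by rewrite (perm_size t_enum) -cardE. Qed.
Let s_cover : is_cover C [set i in s]. Proof. by rewrite (set_perm_enum s_enum). Qed.
Let t_packing : is_packing C [set e in t]. Proof. by rewrite (set_perm_enum t_enum). Qed.

Let rho : R := b1%:R / n%:R.
Let sigma1 := cyc_strat R s b1.
Let sigma2 := cyc_strat R t b2.

Let rho_le1 : rho <= 1.
Proof. by rewrite ler_pdivrMr ?ltr0n // mul1r ler_nat. Qed.

Let sigma1_mixed : is_mixed b1 sigma1.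
Proof. by apply: cyc_strat_mixed; rewrite size_s. Qed.

Let sigma2_mixed : is_mixed b2 sigma2.
Proof. by apply: cyc_strat_mixed; rewrite size_t. Qed.

Let expect_card_sigma2 : expect_card sigma2 = b2%:R.
Proof. by apply: expect_card_cyc_strat; rewrite ?size_t. Qed.

Lemma U1_vs_sigma2_le (s1 : {set V} -> R) : is_mixed b1 s1 -> U1 C s1 sigma2 <= rho * b2%:R.
Proof.
move=> s1_mixed; rewrite U1_by_placement; apply: (expect_mixed_le s1_mixed) => S S_le.
apply: le_trans (expect_F_cyc_packing_le R S t_uniq _ _ t_packing) _; rewrite ?size_t //.
rewrite mulrAC ler_pM2r ?invr_gt0 ?ltr0n // -natrM ler_nat mulnC.
by rewrite leq_mul2r S_le orbT.
Qed.

Lemma U1_sigma1_ge (s2 : {set E} -> R) :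
  is_mixed b2 s2 -> rho * expect_card s2 <= U1 C sigma1 s2.
Proof.
move=> [s2_ge0 _]; rewrite U1_by_attack /expect_card mulr_sumr; apply: ler_sum => T _.
rewrite mulrCA ler_wpM2l //.
by apply: le_trans (expect_F_cyc_cover_ge R T s_uniq _ _ s_cover); rewrite size_s // natrM mulrAC.
Qed.

Lemma U2_sigma1_le (s2 : {set E} -> R) :
  is_mixed b2 s2 -> U2 C sigma1 s2 <= b2%:R * (1 - rho).
Proof.
move=> s2_mixed; rewrite U2E; last by case: sigma1_mixed => _ [].
have := U1_sigma1_ge s2_mixed; have := expect_card_mixed_le s2_mixed.
have : 0 <= 1 - rho by rewrite subr_ge0.
nra.
Qed.

Lemma U2_vs_sigma2_ge (s1 : {set V} -> R) :
  is_mixed b1 s1 -> b2%:R * (1 - rho) <= U2 C s1 sigma2.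
Proof.
move=> s1_mixed; rewrite U2E; last by case: s1_mixed => _ [].
by rewrite expect_card_sigma2; have := U1_vs_sigma2_le s1_mixed; lra.
Qed.

Lemma cyc_NE : is_NE C b1 b2 sigma1 sigma2.
Proof.
split=> // [s1 s1_mixed | s2 s2_mixed].
- apply: le_trans (U1_vs_sigma2_le s1_mixed) _.
  by have := U1_sigma1_ge sigma2_mixed; rewrite expect_card_sigma2.
- exact: le_trans (U2_sigma1_le s2_mixed) (U2_vs_sigma2_ge sigma1_mixed).
Qed.

Lemma NE_expect_card (b1_lt : (b1 < n)%N) (s1 : {set V} -> R) (s2 : {set E} -> R) :
  is_NE C b1 b2 s1 s2 -> expect_card s2 = b2%:R.
Proof.
case=> s1_mixed s2_mixed s1_best s2_best.
have U1_ge := le_trans (U1_sigma1_ge s2_mixed) (s1_best _ sigma1_mixed).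
have U2_ge := le_trans (U2_vs_sigma2_ge s1_mixed) (s2_best _ sigma2_mixed).
have rho_lt1 : rho < 1 by rewrite ltr_pdivrMr ?ltr0n // mul1r ltr_nat.
have := expect_card_mixed_le s2_mixed.
rewrite U2E in U2_ge; last by case: s1_mixed => _ [].
(* (1 - rho) b2 <= U2 = E|T| - U1 <= (1 - rho) E|T| with rho < 1. *)
nra.
Qed.

Lemma NE_values (b1_lt : (b1 < n)%N) (b2_gt0 : (0 < b2)%N)
    (s1 : {set V} -> R) (s2 : {set E} -> R) :
  is_NE C b1 b2 s1 s2 ->
  [/\ U1 C s1 s2 = rho * b2%:R, U2 C s1 s2 = b2%:R * (1 - rho) & rate C s1 s2 = rho].
Proof.
move=> NE; have expect_card_s2 := NE_expect_card b1_lt NE.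
case: NE => s1_mixed s2_mixed s1_best s2_best.
have U1_ge := le_trans (U1_sigma1_ge s2_mixed) (s1_best _ sigma1_mixed).
have U2_ge := le_trans (U2_vs_sigma2_ge s1_mixed) (s2_best _ sigma2_mixed).
have U2_s1_s2 : U2 C s1 s2 = b2%:R - U1 C s1 s2.
  by rewrite U2E ?expect_card_s2 //; case: s1_mixed => _ [].
rewrite expect_card_s2 in U1_ge.
have U1_s1_s2 : U1 C s1 s2 = rho * b2%:R by lra.
split=> //; first by rewrite U2_s1_s2 U1_s1_s2; ring.
rewrite (rate_full_support C s1 (expect_card_mixed_full s2_mixed expect_card_s2)).
by rewrite U1_s1_s2 mulfK // pnatr_eq0 -lt0n.
Qed.

End Equilibrium.

Unset Implicit Arguments. Set Strict Implicit.

Theorem mainTheorem10 (R : realFieldType) (V E : finType) (C : V -> {set E})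
  (b1 b2 : nat) :
  (0 < #|V|)%N -> (0 < #|E|)%N -> (forall e : E, exists i : V, e \in C i) ->
  (0 < b1)%N -> (0 < b2)%N ->
  (b1 < nstar C)%N -> (b2 < mstar C)%N -> nstar C = mstar C ->
  (forall (Smin : {set V}) (Tmax : {set E}) (s : seq V) (t : seq E),
      min_cover C Smin -> max_packing C Tmax ->
      perm_eq s (enum Smin) -> perm_eq t (enum Tmax) ->
      is_NE C b1 b2 (cyc_strat R s b1) (cyc_strat R t b2))
  /\
  (forall (s1 : {set V} -> R) (s2 : {set E} -> R),
      is_NE C b1 b2 s1 s2 ->
      [/\ U1 C s1 s2 = (b1 * b2)%:R / (nstar C)%:R,
          U2 C s1 s2 = b2%:R * (1 - b1%:R / (nstar C)%:R) &
          rate C s1 s2 = b1%:R / (nstar C)%:R]).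
Proof.
move=> _ _ covered _ b2_gt0 b1_lt b2_lt n_eq_m.
have n_gt0 : (0 < nstar C)%N by apply: leq_ltn_trans b1_lt.
have b2_le : (b2 <= nstar C)%N by rewrite n_eq_m ltnW.
split=> [Smin Tmax s t [Smin_cover card_Smin] [Tmax_packing card_Tmax] s_enum t_enum | s1 s2 NE].
  apply: (cyc_NE R Smin_cover Tmax_packing card_Smin) => //; last exact: ltnW.
  by rewrite card_Tmax n_eq_m.
have [Smin [Smin_cover card_Smin]] := exists_min_cover covered.
have [Tmax [Tmax_packing card_Tmax]] := exists_max_packing C.
rewrite -n_eq_m in card_Tmax.
have [-> -> ->] := NE_values Smin_cover Tmax_packing card_Smin card_Tmax
  (perm_refl _) (perm_refl _) n_gt0 (ltnW b1_lt) b2_le b1_lt b2_gt0 NE.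
by rewrite natrM mulrAC.
Qed.
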